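(* Let $X$ be a compact metric space with metric $d$, let $f:X\to X$ be continuous, and let $\delta>0$. If $C\subset X$ is a countable Li-Yorke chaotic set (resp. Li-Yorke $\delta$-chaotic set), then there exists a strictly increasing sequence $Q$ of positive integers such that $C$ is a distributional chaotic set in the sequence $Q$ (resp. a distributional $\delta$-chaotic set in the sequence $Q$).
   Context: Let $\Delta=\{(x,x):x\in X\}$. A pair $(x,y)$ is a Li-Yorke scrambled pair if $\liminf_{n\to\infty}d(f^n x,f^n y)=0$ and $\limsup_{n\to\infty}d(f^nx,f^ny)>0$; it is a Li-Yorke $\delta$-scrambled pair if $\liminf_{n\to\infty}d(f^n x,f^n y)=0$ and $\limsup_{n\to\infty}d(f^nx,f^ny)>\delta$. A set $C$ is Li-Yorke chaotic (resp. Li-Yorke $\delta$-chaotic) if every $(x,y)\in C\times C\setminus\Delta$ is a Li-Yorke scrambled pair (resp. Li-Yorke $\delta$-scrambled pair). For a strictly increasing sequence $Q=\{m_i\}$ of positive integers, $x,y\in X$, $t>0$, $n\ge 1$, put $\Phi^n_{(xy,Q)}(t)=\frac1n\#\{1\le i\le n: d(f^{m_i}(x),f^{m_i}(y))\le t\}$, $\Phi_{(xy,Q)}(t)=\liminf_{n}\Phi^n_{(xy,Q)}(t)$, $\Phi^\star_{(xy,Q)}(t)=\limsup_n\Phi^n_{(xy,Q)}(t)$. A pair $(x,y)$ is a distributional scrambled pair in $Q$ if $\Phi^\star_{(xy,Q)}(t)=1$ for all $t>0$ and $\Phi_{(xy,Q)}(s)=0$ for some $s>0$; it is a distributional $\delta$-scrambled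 pair in $Q$ if $\Phi^\star_{(xy,Q)}(t)=1$ for all $t>0$ and $\Phi_{(xy,Q)}(\delta)=0$. A set $D$ is a distributional chaotic set (resp. distributional $\delta$-chaotic set) in $Q$ if every $(x,y)\in D\times D\setminus\Delta$ is a distributional scrambled pair (resp. distributional $\delta$-scrambled pair) in $Q$. *)

From HB Require Import structures.
From mathcomp Require Import all_boot all_order all_algebra.
From mathcomp Require Import all_classical all_reals all_analysis.
Set Implicit Arguments. Unset Strict Implicit. Unset Printing Implicit Defensive.
Import Order.TTheory GRing.Theory Num.Theory.
Local Open Scope classical_set_scope.
Local Open Scope ring_scope.

Section Chaos.
Context {R : realType} {X : metricType R}.
Variable f : X -> X.

Definition orbit_dist (x y : X) : nat -> \bar R :=
  fun n => (mdist (iter n f x) (iter n f y))%:E.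

Definition LY_pair (x y : X) : Prop :=
  limn_einf (orbit_dist x y) = 0%E /\ (0%E < limn_esup (orbit_dist x y))%E.

Definition LY_delta_pair (delta : R) (x y : X) : Prop :=
  limn_einf (orbit_dist x y) = 0%E /\ (delta%:E < limn_esup (orbit_dist x y))%E.

Definition LY_chaotic (C : set X) : Prop :=
  forall x y, C x -> C y -> x <> y -> LY_pair x y.

Definition LY_delta_chaotic (delta : R) (C : set X) : Prop :=
  forall x y, C x -> C y -> x <> y -> LY_delta_pair delta x y.

(* Q = {m_1 < m_2 < ...} is encoded as m : nat -> nat with m i = m_{i+1}. *)
Definition incr_pos_seq (m : nat -> nat) : Prop :=
  (forall i, (0 < m i)%N) /\ (forall i j, (i < j)%N -> (m i < m j)%N).

Definition Phi_n (m : nat -> nat) (x y : X) (t : R) (n : nat) : R :=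
  (#|[set i : 'I_n | mdist (iter (m i) f x) (iter (m i) f y) <= t]|%:R) / n%:R.

(* the sequences (Phi^n)_{n >= 1}, indexed from k = 0 as n = k+1 *)
Definition Phi_lower (m : nat -> nat) (x y : X) (t : R) : \bar R :=
  limn_einf (fun k => (Phi_n m x y t k.+1)%:E).
Definition Phi_upper (m : nat -> nat) (x y : X) (t : R) : \bar R :=
  limn_esup (fun k => (Phi_n m x y t k.+1)%:E).

Definition distr_pair (m : nat -> nat) (x y : X) : Prop :=
  (forall t, 0 < t -> Phi_upper m x y t = 1%E) /\
  (exists s, 0 < s /\ Phi_lower m x y s = 0%E).

Definition distr_delta_pair (delta : R) (m : nat -> nat) (x y : X) : Prop :=
  (forall t, 0 < t -> Phi_upper m x y t = 1%E) /\ Phi_lower m x y delta = 0%E.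

Definition distr_chaotic (m : nat -> nat) (D : set X) : Prop :=
  forall x y, D x -> D y -> x <> y -> distr_pair m x y.

Definition distr_delta_chaotic (delta : R) (m : nat -> nat) (D : set X) : Prop :=
  forall x y, D x -> D y -> x <> y -> distr_delta_pair delta m x y.

End Chaos.

(* Encode every ordered pair (x, y) of distinct points of C, together with a
   flag near/far, by a natural number, and fix a schedule assigning a code to every
   index i so that each code owns runs of indices [L, N) with N >= K L, for
   arbitrarily large K.  Choose m_1 < m_2 < ... one at a time: at an index coded
   (x, y, near) take d(f^m_i x, f^m_i y) < 1/(i+1), possible since the liminf is 0;
   at an index coded (x, y, far) take d(f^m_i x, f^m_i y) > delta, possible since
   the limsup exceeds delta.  At the end of a near-run almost all of the first N
   distances are small, so the upper distribution function is 1; at the end of a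
   far-run almost none is at most delta, so the lower one vanishes at delta. *)

From HB Require Import structures.
From mathcomp Require Import all_boot all_order all_algebra.
From mathcomp Require Import all_classical all_reals all_analysis.
From mathcomp Require Import lra.
Import Order.TTheory GRing.Theory Num.Theory.
Local Open Scope classical_set_scope.

Definition has_long_runs (P : nat -> Prop) : Prop :=
  forall K, exists L N,
    [/\ (K <= L)%N, (K * L <= N)%N & forall i, (L <= i < N)%N -> P i].

Lemma long_runs_impl {P Q : nat -> Prop} M :
  has_long_runs P -> (forall i, (M <= i)%N -> P i -> Q i) -> has_long_runs Q.
Proof.
move=> runsP PQ K; have [L [N [KL KLN PLN]]] := runsP (maxn K M).
exists L, N; split.
- exact: leq_trans (leq_maxl K M) KL.
- exact: leq_trans (leq_mul (leq_maxl K M) (leqnn L)) KLN.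
- move=> i /andP[Li iN]; apply: PQ (PLN i _); last by rewrite Li.
  exact: leq_trans (leq_maxr K M) (leq_trans KL Li).
Qed.

Lemma trunc_log2_block k i :
  (2 ^ 2 ^ k <= i < 2 ^ 2 ^ k.+1)%N -> trunc_log 2 (trunc_log 2 i) = k.
Proof.
move=> /andP[lo hi]; have i_gt0 : (0 < i)%N by apply: leq_trans lo; rewrite expn_gt0.
apply: trunc_log_eq => //; apply/andP; split; first exact: trunc_log_max.
rewrite ltnNge; apply/negP => le_log.
have := leq_trans (leq_pexp2l (isT : (0 < 2)%N) le_log) (trunc_logP (isT : (1 < 2)%N) i_gt0).
by rewrite leqNgt hi.
Qed.

(* On the block [2^2^k, 2^2^(k+1)) the schedule is the 2-adic valuation of k+1. *)
Definition schedule (i : nat) : nat := logn 2 (trunc_log 2 (trunc_log 2 i)).+1.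

Lemma schedule_long_runs c : has_long_runs (fun i => schedule i = c).
Proof.
(* k + 1 = 2^c (2K + 1) has 2-adic valuation c, and k >= K. *)
move=> K; set k := (2 ^ c * (K.*2).+1).-1.
have kS : k.+1 = 2 ^ c * (K.*2).+1 by rewrite /k prednK // muln_gt0 expn_gt0.
have K_le_k : (K <= k)%N.
  rewrite -ltnS kS; apply: leq_trans (leq_pmull _ _); last by rewrite expn_gt0.
  by rewrite ltnS -addnn leq_addr.
have le_exp n : (n <= 2 ^ n)%N by apply/ltnW/ltn_expl.
have K_le_L : (K <= 2 ^ 2 ^ k)%N by do 2 apply: leq_trans (le_exp _).
exists (2 ^ 2 ^ k), (2 ^ 2 ^ k.+1); split => //.
- by rewrite expnS mul2n -addnn expnD mulnC leq_mul2l K_le_L orbT.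
- move=> i /trunc_log2_block block_k.
  rewrite /schedule block_k kS lognM ?expn_gt0 // pfactorK //.
  by rewrite logn_coprime ?addn0 // coprime2n /= odd_double.
Qed.

Lemma incr_pos_seq_choice {G : nat -> nat -> Prop} :
  (forall i N, exists n, (N < n)%N /\ G i n) ->
  exists m : nat -> nat, incr_pos_seq m /\ forall i, G i (m i).
Proof.
move=> hG; have [pick hpick] := choice (fun iN : nat * nat => hG iN.1 iN.2).
pose m := fix m i := if i is i'.+1 then pick (i, m i') else pick (0%N, 0%N).
have m_incr i : (m i < m i.+1)%N by exact: (hpick (i.+1, m i)).1.
exists m; split; last by case=> [|i]; [exact: (hpick (0, 0)%N).2 | exact: (hpick (i.+1, m i)).2].
split; last exact: homo_ltn ltn_trans m_incr.
by case=> [|i]; [exact: (hpick (0, 0)%N).1 | exact: leq_ltn_trans (leq0n _) (m_incr i)].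
Qed.

Lemma incr_pos_seq_long_runs {I : countType} {G : I -> nat -> nat -> Prop} :
  (forall c i N, exists n, (N < n)%N /\ G c i n) ->
  exists m : nat -> nat,
    incr_pos_seq m /\ forall c, has_long_runs (fun i => G c i (m i)).
Proof.
move=> hG.
pose G_sched i n := forall c, unpickle (schedule i) = Some c -> G c i n.
have G_schedP i N : exists n, (N < n)%N /\ G_sched i n.
  rewrite /G_sched; case: (unpickle (schedule i)) => [c|]; last by exists N.+1.
  by have [n [Nn Gn]] := hG c i N; exists n; split => // _ [<-].
have [m [m_incr m_sched]] := incr_pos_seq_choice G_schedP.
exists m; split => // c.
apply: (long_runs_impl 0 (schedule_long_runs (pickle c))) => i _ sched_i.
by apply: m_sched; rewrite sched_i pickleK.
Qed.

Lemma card_ord_set_sum N (P : pred nat) :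
  #|[set i : 'I_N | P i]| = (\sum_(0 <= i < N) P i)%N.
Proof.
rewrite -sum1_card big_mkcond big_mkord /=; apply: eq_bigr => i _.
by rewrite unfold_in /in_set /= asboolb; case: (P i).
Qed.

Lemma card_ord_set_ge {N L : nat} {P : pred nat} :
  (forall i, (L <= i < N)%N -> P i) -> (N - L <= #|[set i : 'I_N | P i]|)%N.
Proof.
move=> PLN; rewrite card_ord_set_sum.
have [LN|/ltnW] := leqP L N; last by rewrite -subn_eq0 => /eqP ->.
rewrite (@big_cat_nat _ _ _ L) //=; apply: leq_trans (leq_addl _ _).
rewrite (eq_big_nat _ _ (F2 := fun _ => 1%N)); last by move=> i /PLN ->.
by rewrite sum_nat_const_nat muln1.
Qed.

Lemma card_ord_set_le {N L : nat} {P : pred nat} :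
  (forall i, (L <= i < N)%N -> ~~ P i) -> (#|[set i : 'I_N | P i]| <= L)%N.
Proof.
move=> nPLN; have [LN|NL] := leqP L N; last first.
  by apply: leq_trans (max_card _) _; rewrite card_ord ltnW.
rewrite card_ord_set_sum (@big_cat_nat _ _ _ L) //=.
rewrite [X in (_ + X)%N]big_nat_cond [X in (_ + X)%N]big1 ?addn0; last first.
  by move=> i /andP[/nPLN /negbTE -> _].
apply: (@leq_trans (\sum_(0 <= i < L) 1)%N); first exact: leq_sum (fun i _ => leq_b1 (P i)).
by rewrite sum_nat_const_nat subn0 muln1.
Qed.

Local Open Scope ring_scope.

Section ErealSequences.
Context {R : realType}.
Implicit Types (u : (\bar R)^nat).

Lemma limn_esupE u : limn_esup u = ereal_inf (range (esups u)).
Proof. by rewrite limn_esup_lim; apply/cvg_lim => //; exact: cvg_esups_inf. Qed.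

Lemma limn_esup_eq u (l : R) : (forall n, (u n <= l%:E)%E) ->
  (forall e, 0 < e -> forall N, exists n, (N <= n)%N /\ ((l - e)%:E <= u n)%E) ->
  limn_esup u = l%:E.
Proof.
move=> ub close; rewrite limn_esupE; apply/eqP; rewrite eq_le; apply/andP; split.
  apply: ge_ereal_inf; exists (esups u 0); first by exists 0%N.
  by apply: ge_ereal_sup => _ [k _ <-]; exact: ub.
apply: le_ereal_inf_tmp => _ [N _ <-]; apply/lee_addgt0Pr => e e0.
have [n [Nn un]] := close e e0 N.
rewrite -[l](subrK e) EFinD; apply: leeD2r; apply: le_trans un _.
by apply: ereal_sup_ubound; exists n.
Qed.

Lemma limn_einf_eq0 u : (forall n, (0 <= u n)%E) ->
  (forall e, 0 < e -> forall N, exists n, (N <= n)%N /\ (u n <= e%:E)%E) ->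
  limn_einf u = 0%E.
Proof.
move=> u_ge0 close; rewrite /limn_einf (@limn_esup_eq _ 0) ?oppe0 //.
  by move=> n /=; rewrite oppe_le0.
move=> e e0 N; have [n [Nn un]] := close e e0 N; exists n; split => //.
by rewrite /= sub0r EFinN leeN2.
Qed.

Lemma limn_esup_gt_frequently {u} {a : R} : (a%:E < limn_esup u)%E ->
  forall N, exists n, (N <= n)%N /\ (a%:E < u n)%E.
Proof.
rewrite limn_esupE => a_lt N.
have : (a%:E < esups u N)%E by apply: lt_le_trans a_lt _; apply: ereal_inf_lbound; exists N.
by case/ereal_sup_gt => _ [n Nn <-] a_lt_u; exists n.
Qed.

Lemma limn_einf0_lt_frequently {u} : limn_einf u = 0%E ->
  forall e, 0 < e -> forall N, exists n, (N <= n)%N /\ (u n < e%:E)%E.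
Proof.
rewrite /limn_einf => /eqP; rewrite oppe_eq0 => /eqP sup0 e e0 N.
have [|n [Nn]] := @limn_esup_gt_frequently (fun n => - u n)%E (- e) _ N.
  by rewrite sup0 lte_fin oppr_lt0.
by rewrite EFinN lteN2; exists n.
Qed.

Lemma ereal_gt0_fin_lt (z : \bar R) : (0 < z)%E -> exists s : R, 0 < s /\ (s%:E < z)%E.
Proof.
case: z => [r||] //= r0; last by exists 1; split => //; exact: ltry.
exists (r / 2); rewrite lte_fin in r0; rewrite lte_fin.
by split; [rewrite divr_gt0 | rewrite ltr_pdivrMr // ltr_pMr // ltr1n].
Qed.

End ErealSequences.

Section Proportion.
Context {R : realType}.

Definition proportion (P : pred nat) (n : nat) : R :=
  #|[set i : 'I_n | P i]|%:R / n%:R.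

Lemma long_runs_small_start {P : nat -> Prop} {e : R} N0 :
  0 < e -> has_long_runs P -> exists L N,
    [/\ (N0 < N)%N, (L <= N)%N, L%:R <= e * N%:R & forall i, (L <= i < N)%N -> P i].
Proof.
move=> e0 runs; have [L [N [KL KLN PLN]]] := runs (N0 + Num.truncn e^-1).+1.
set K := (N0 + _).+1 in KL KLN; exists L, N.
have L_gt0 : (0 < L)%N by apply: leq_trans KL.
have K_le_N : (K <= N)%N by apply: leq_trans (leq_pmulr _ L_gt0) KLN.
split => //.
- by apply: leq_trans K_le_N; rewrite /K ltnS leq_addr.
- by apply: leq_trans KLN; rewrite leq_pmull.
have eK : 1 < e * K%:R.
  rewrite -ltr_pdivrMl // mulr1; apply: lt_le_trans (truncnS_gt _) _.
  by rewrite ler_nat ltnS leq_addl.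
have : K%:R * L%:R <= N%:R :> R by rewrite -natrM ler_nat.
have : 0 <= L%:R :> R by [].
nra.
Qed.

Lemma long_runs_limn_esup_proportion (P : pred nat) :
  has_long_runs P -> limn_esup (fun k => (proportion P k.+1)%:E) = 1%E.
Proof.
move=> runs; apply: limn_esup_eq.
  move=> k; rewrite lee_fin ler_pdivrMr ?ltr0Sn // mul1r ler_nat.
  by apply: leq_trans (max_card _) _; rewrite card_ord.
move=> e e0 N0; have [L [N [N0N LN small PLN]]] := long_runs_small_start N0 e0 runs.
have N_gt0 : (0 < N)%N by apply: leq_ltn_trans N0N.
exists N.-1; rewrite -ltnS prednK //; split => //.
move: small; have := card_ord_set_ge PLN; rewrite -(ler_nat R) natrB //.
rewrite lee_fin /proportion ler_pdivlMr ?ltr0n //.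
set c := (#|_|)%:R; lra.
Qed.

Lemma long_runs_limn_einf_proportion (P : pred nat) :
  has_long_runs (fun i => ~~ P i) -> limn_einf (fun k => (proportion P k.+1)%:E) = 0%E.
Proof.
move=> runs; apply: limn_einf_eq0 => [k|e e0 N0]; first by rewrite lee_fin divr_ge0.
have [L [N [N0N _ small nPLN]]] := long_runs_small_start N0 e0 runs.
have N_gt0 : (0 < N)%N by apply: leq_ltn_trans N0N.
exists N.-1; rewrite -ltnS prednK //; split => //.
move: small; have := card_ord_set_le nPLN; rewrite -(ler_nat R).
rewrite lee_fin /proportion ler_pdivrMr ?ltr0n //.
set c := (#|_|)%:R; lra.
Qed.

End Proportion.

Section DistributionalChaos.
Context {R : realType} {X : metricType R}.
Variable f : X -> X.

Lemma LY_pair_delta {x y : X} :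
  LY_pair f x y -> exists s, 0 < s /\ LY_delta_pair f s x y.
Proof. by case=> inf0 /ereal_gt0_fin_lt[s [s0 s_lt]]; exists s. Qed.

Lemma LY_chaotic_delta {C : set X} : LY_chaotic f C ->
  exists s : X -> X -> R, forall x y, C x -> C y -> x <> y ->
    0 < s x y /\ LY_delta_pair f (s x y) x y.
Proof.
move=> LY.
have gap (p : X * X) : exists s : R, C p.1 -> C p.2 -> p.1 <> p.2 ->
    0 < s /\ LY_delta_pair f s p.1 p.2.
  case: p => x y /=; have [[Cx [Cy xy]]|not_pair] := pselect (C x /\ C y /\ x <> y).
    by have [s gap] := LY_pair_delta (LY x y Cx Cy xy); exists s.
  by exists 0 => Cx Cy xy; case: not_pair.
have [s s_gap] := choice gap.
by exists (fun x y => s (x, y)) => x y; exact: (s_gap (x, y)).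
Qed.

Lemma LY_delta_pair_frequently {s : R} {x y : X} : LY_delta_pair f s x y ->
  forall (far : bool) e, 0 < e -> forall N, exists n, (N < n)%N /\
    if far then s < mdist (iter n f x) (iter n f y)
    else mdist (iter n f x) (iter n f y) < e.
Proof.
case=> inf0 sup_gt [] e e0 N.
  have [n [Nn]] := limn_esup_gt_frequently sup_gt N.+1.
  by rewrite lte_fin => gt; exists n.
have [n [Nn]] := limn_einf0_lt_frequently inf0 _ e0 N.+1.
by rewrite lte_fin => lt; exists n.
Qed.

Lemma LY_delta_pairs_distr_seq {C : set X} {s : X -> X -> R} :
  countable C ->
  (forall x y, C x -> C y -> x <> y -> LY_delta_pair f (s x y) x y) ->
  exists m, incr_pos_seq m /\
    forall x y, C x -> C y -> x <> y -> distr_delta_pair f (s x y) m x y.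
Proof.
move=> /countable_injP[h h_inj] LY.
pose dist x y n := mdist (iter n f x) (iter n f y).
pose G (c : nat * nat * bool) i n := forall x y, C x -> C y -> x <> y ->
  c.1 = (h x, h y) -> if c.2 then s x y < dist x y n else dist x y n < (i.+1%:R)^-1.
have hG c i N : exists n, (N < n)%N /\ G c i n.
  have [[x0 [y0 [Cx0 [Cy0 [xy0 c_xy0]]]]]|no_pair] :=
    pselect (exists x y, C x /\ C y /\ x <> y /\ c.1 = (h x, h y)); last first.
    by exists N.+1; split => // x y Cx Cy xy c_xy; case: no_pair; exists x, y.
  have code_inj x y : C x -> C y -> c.1 = (h x, h y) -> x = x0 /\ y = y0.
    move=> Cx Cy; rewrite c_xy0 => -[hx hy].
    by split; apply: h_inj; rewrite ?hx ?hy //; exact: mem_set.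
  have inv_gt0 : 0 < (i.+1%:R : R)^-1 by rewrite invr_gt0.
  have [n [Nn close_far]] :=
    LY_delta_pair_frequently (LY x0 y0 Cx0 Cy0 xy0) c.2 _ inv_gt0 N.
  by exists n; split => // x y Cx Cy _ /(code_inj x y Cx Cy)[-> ->].
have [m [m_incr runs]] := incr_pos_seq_long_runs hG.
exists m; split => // x y Cx Cy xy; split.
- move=> t t0.
  apply: (long_runs_limn_esup_proportion (fun i => dist x y (m i) <= t)).
  apply: (long_runs_impl (Num.truncn t^-1) (runs (h x, h y, false))).
  move=> i ti /(_ x y Cx Cy xy erefl) /= close; apply/ltW/(lt_le_trans close).
  rewrite -[t]invrK lef_pV2 ?posrE ?invr_gt0 ?ltr0Sn //.
  by apply/ltW/(lt_le_trans (truncnS_gt _)); rewrite ler_nat ltnS.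
- apply: (long_runs_limn_einf_proportion (fun i => dist x y (m i) <= s x y)).
  apply: (long_runs_impl 0 (runs (h x, h y, true))).
  by move=> i _ /(_ x y Cx Cy xy erefl) /=; rewrite -ltNge.
Qed.

End DistributionalChaos.

Theorem theorem3p3 (R : realType) (X : metricType R) (f : X -> X) (delta : R)
  (C : set X) :
  compact [set: X] -> continuous f -> 0 < delta -> countable C ->
  (LY_chaotic f C -> exists m : nat -> nat, incr_pos_seq m /\ distr_chaotic f m C) /\
  (LY_delta_chaotic f delta C ->
     exists m : nat -> nat, incr_pos_seq m /\ distr_delta_chaotic f delta m C).
Proof.
move=> _ _ _ C_countable; split => LY; last exact: LY_delta_pairs_distr_seq.
have [s s_gap] := LY_chaotic_delta f LY.
have [m [m_incr distr]] :=
  LY_delta_pairs_distr_seq f C_countable (fun x y Cx Cy xy => (s_gap x y Cx Cy xy).2).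
exists m; split => // x y Cx Cy xy; have [upper lower] := distr x y Cx Cy xy.
by split => //; exists (s x y); split => //; case: (s_gap x y Cx Cy xy).
Qed.
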